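(* Let $\phi\in\Phi$, let $f:\mathbb{R}^n\to(-\infty,+\infty]$ be proper lsc, $\Omega\subseteq\mathbb{R}^n$ closed, $\delta\ge0$, $p\in[1,\infty]$, and $\mathcal{J}=\{J_1,\dots,J_m\}$ a partition of $\{1,\dots,n\}$. Suppose the problem $\min_x\{\|G_{\mathcal{J},p}(x)\|_0: f(x)\le\delta,\ x\in\Omega\}$ has a nonempty global optimal solution set and nonzero optimal value $s^*$, and let $\mathcal{S}=\{x\in\Omega: f(x)\le\delta\}$. Suppose there exists $\alpha>0$ such that $\pi_{s^*}(G_{\mathcal{J},p}(x))\ge\alpha$ for all $x\in\mathcal{S}$. Let $\bar\varrho=\phi'_-(1)/\alpha$. Then: (i) for all $x\in\mathcal{S}$ and $w\in[0,e]$, $\sum_{i=1}^m\phi(w_i)+\bar\varrho\langle e-w,G_{\mathcal{J},p}(x)\rangle\ge s^*$, where $s^*$ is also the optimal value of the MPEC $$\textstyle (Q)\ \min_{x,w}\{\sum_{i=1}^m\phi(w_i):\ \langle e-w,G_{\mathcal{J},p}(x)\rangle=0,\ 0\le w\le e,\ x\in\Omega,\ f(x)\le\delta\};$$ (ii) for every $\varrho>\bar\varrho$, the set of global optimal solutions of $$\textstyle \min_{x\in\mathbb{R}^n,w\in\mathbb{R}^m}\{\sum_{i=1}^m\phi(w_i)+\varrho\langle e-w,G_{\mathcal{J},p}(x)\rangle:\ f(x)\le\delta,\ x\in\Omega,\ 0\le w\le e\}$$ coincides with the set of global optimal solutions of $(Q)$.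
   Context: $\Phi$ is the family of proper lsc functions $\phi:\mathbb{R}\to(-\infty,+\infty]$ with $\mathrm{int}(\mathrm{dom}\,\phi)\supseteq[0,1]$, convex on $[0,1]$, such that $\min_{t\in[0,1]}\phi(t)=0$ is attained at a (fixed) point $t^*\in[0,1)$, and $\phi(1)=1$; $\phi'_-(1)$ is the left derivative of $\phi$ at $1$. $G_{\mathcal{J},p}(x):=(\|x_{J_1}\|_p,\dots,\|x_{J_m}\|_p)^T$; $\|v\|_0$ counts nonzero entries; $e$ is the all-ones vector; for a vector $v$, $\pi(v)$ is the vector of the entries of $|v|$ arranged in nonincreasing order and $\pi_i(v)$ its $i$-th entry. *)

From Stdlib Require Import Reals Lra List Arith.
Import ListNotations.
Open Scope R_scope.

Inductive ereal : Type := Fin (r : R) | PInf.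

Definition ele (a : ereal) (d : R) : Prop :=
  match a with Fin r => r <= d | PInf => False end.
Definition elt (t : R) (a : ereal) : Prop :=
  match a with Fin r => t < r | PInf => True end.
Definition efin (a : ereal) : Prop :=
  match a with Fin _ => True | PInf => False end.
(** real value of a finite extended real (only used where finiteness holds) *)
Definition eval (a : ereal) : R :=
  match a with Fin r => r | PInf => 0 end.

(** Vectors of R^n are represented as nat -> R vanishing from index n on. *)
Definition vec (n : nat) (x : nat -> R) : Prop := forall i, (n <= i)%nat -> x i = 0.
Definition near (n : nat) (x y : nat -> R) (eps : R) : Prop :=
  forall i, (i < n)%nat -> Rabs (y i - x i) < eps.

Definition proper_vec (n : nat) (f : (nat -> R) -> ereal) : Prop :=
  exists x, vec n x /\ efin (f x).
Definition lsc_vec (n : nat) (f : (nat -> R) -> ereal) : Prop :=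
  forall x, vec n x -> forall t, elt t (f x) ->
    exists eps, 0 < eps /\ forall y, vec n y -> near n x y eps -> elt t (f y).
Definition closed_vec (n : nat) (Om : (nat -> R) -> Prop) : Prop :=
  forall x, vec n x ->
    (forall eps, 0 < eps -> exists y, vec n y /\ Om y /\ near n x y eps) -> Om x.

Definition proper_R (phi : R -> ereal) : Prop := exists t, efin (phi t).
Definition lsc_R (phi : R -> ereal) : Prop :=
  forall x t, elt t (phi x) ->
    exists eps, 0 < eps /\ forall y, Rabs (y - x) < eps -> elt t (phi y).
Definition in_Phi (phi : R -> ereal) : Prop :=
  proper_R phi /\ lsc_R phi /\
  (* int(dom phi) contains [0,1] *)
  (forall t, 0 <= t <= 1 -> exists eps, 0 < eps /\
       forall u, Rabs (u - t) < eps -> efin (phi u)) /\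
  (forall s t l, 0 <= s <= 1 -> 0 <= t <= 1 -> 0 <= l <= 1 ->
       eval (phi (l * s + (1 - l) * t)) <= l * eval (phi s) + (1 - l) * eval (phi t)) /\
  (exists tstar, 0 <= tstar < 1 /\ phi tstar = Fin 0 /\
       forall t, 0 <= t <= 1 -> 0 <= eval (phi t)) /\
  phi 1 = Fin 1.

Definition left_deriv1 (phi : R -> ereal) (d : R) : Prop :=
  forall eps, 0 < eps -> exists del, 0 < del /\
    forall t, 1 - del < t < 1 ->
      Rabs ((eval (phi 1) - eval (phi t)) / (1 - t) - d) < eps.

Inductive pexp : Type := PFin (q : R) | PInfty.
Definition valid_p (p : pexp) : Prop :=
  match p with PFin q => 1 <= q | PInfty => True end.

(** partition {J_1,..,J_m} of {0,..,n-1}: blk i = index of the block containing i *)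
Definition blk_partition (n m : nat) (blk : nat -> nat) : Prop :=
  (forall i, (i < n)%nat -> (blk i < m)%nat) /\
  (forall j, (j < m)%nat -> exists i, (i < n)%nat /\ blk i = j).

Fixpoint sumR (k : nat) (g : nat -> R) : R :=
  match k with O => 0 | S k' => sumR k' g + g k' end.
Fixpoint maxR (k : nat) (g : nat -> R) : R :=
  match k with O => 0 | S k' => Rmax (maxR k' g) (g k') end.

Definition rpow (a b : R) : R :=
  if Req_EM_T a 0 then 0 else Rpower a b.

Definition block_norm (n : nat) (blk : nat -> nat) (p : pexp) (x : nat -> R) (j : nat) : R :=
  match p with
  | PFin q => rpow (sumR n (fun i => if Nat.eqb (blk i) j then rpow (Rabs (x i)) q else 0)) (1 / q)
  | PInfty => maxR n (fun i => if Nat.eqb (blk i) j then Rabs (x i) else 0)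
  end.

Definition G (n : nat) (blk : nat -> nat) (p : pexp) (x : nat -> R) : nat -> R :=
  fun j => block_norm n blk p x j.

Fixpoint l0 (m : nat) (v : nat -> R) : nat :=
  match m with
  | O => O
  | S k => (l0 k v + (if Req_EM_T (v k) 0 then 0 else 1))%nat
  end.

(** pi(v): entries of |v| in nonincreasing order; pi_i(v) its i-th entry (1-based) *)
Fixpoint insert_desc (a : R) (l : list R) : list R :=
  match l with
  | [] => [a]
  | b :: l' => if Rle_dec b a then a :: l else b :: insert_desc a l'
  end.
Fixpoint sort_desc (l : list R) : list R :=
  match l with [] => [] | a :: l' => insert_desc a (sort_desc l') end.
Definition pi_vec (m : nat) (v : nat -> R) : list R :=
  sort_desc (map (fun j => Rabs (v j)) (seq 0 m)).
Definition pi_i (m : nat) (v : nat -> R) (i : nat) : R :=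
  nth (i - 1) (pi_vec m v) 0.

Definition inner (m : nat) (u v : nat -> R) : R := sumR m (fun j => u j * v j).
Definition e_minus (w : nat -> R) : nat -> R := fun j => 1 - w j.

Definition Phisum (m : nat) (phi : R -> ereal) (w : nat -> R) : R :=
  sumR m (fun i => eval (phi (w i))).

Definition box (m : nat) (w : nat -> R) : Prop :=
  vec m w /\ forall j, (j < m)%nat -> 0 <= w j <= 1.

Definition is_gmin (feas : (nat -> R) -> (nat -> R) -> Prop)
  (obj : (nat -> R) -> (nat -> R) -> R) (x w : nat -> R) : Prop :=
  feas x w /\ forall x' w', feas x' w' -> obj x w <= obj x' w'.
Definition opt_val (feas : (nat -> R) -> (nat -> R) -> Prop)
  (obj : (nat -> R) -> (nat -> R) -> R) (v : R) : Prop :=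
  (forall x w, feas x w -> v <= obj x w) /\
  (forall eps, 0 < eps -> exists x w, feas x w /\ obj x w < v + eps).

(* The tangent line of the convex function phi at 1 gives
   phi t >= 1 - phi'_-(1) (1 - t) on [0,1].  Hence a block with G_j >= alpha
   contributes phi(w_j) + rhobar (1 - w_j) G_j >= 1 to the penalized objective,
   and every other block contributes >= 0.  Since pi_{s*}(G(x)) >= alpha, at
   least s* blocks have G_j >= alpha, so the penalized objective is >= s*.
   The bound is attained by a feasible point of (Q): an optimal x with
   w_j = t* on the zero blocks and w_j = 1 elsewhere.  A lower bound with
   penalty rhobar that is attained on the constraint set makes every penalty
   rho > rhobar exact. *)
From Stdlib Require Import Reals Lra List Arith Lia.
Import ListNotations.
Open Scope R_scope.

Lemma sumR_ext k f g : (forall i, (i < k)%nat -> f i = g i) -> sumR k f = sumR k g.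
Proof. induction k; simpl; intros H; auto. rewrite IHk, H; auto. Qed.

Lemma sumR_le k f g : (forall i, (i < k)%nat -> f i <= g i) -> sumR k f <= sumR k g.
Proof.
  induction k; simpl; intros H; [lra|].
  pose proof (IHk (fun i Hi => H i ltac:(lia))). pose proof (H k ltac:(lia)). lra.
Qed.

Lemma sumR_0 k : sumR k (fun _ => 0) = 0.
Proof. induction k; simpl; lra. Qed.

Lemma sumR_plus k f g : sumR k (fun i => f i + g i) = sumR k f + sumR k g.
Proof. induction k; simpl; [ring|]. rewrite IHk; ring. Qed.

Lemma sumR_scal k c f : sumR k (fun i => c * f i) = c * sumR k f.
Proof. induction k; simpl; [ring|]. rewrite IHk; ring. Qed.

Lemma l0_sumR m g : INR (l0 m g) = sumR m (fun i => if Req_EM_T (g i) 0 then 0 else 1).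
Proof. induction m; simpl; auto. rewrite plus_INR, IHm. destruct Req_EM_T; simpl; lra. Qed.

Lemma rpow_ge0 a b : 0 <= rpow a b.
Proof. unfold rpow. destruct Req_EM_T; [lra|]. left; apply exp_pos. Qed.

Lemma maxR_ge0 k g : 0 <= maxR k g.
Proof. induction k; simpl; [lra|]. eapply Rle_trans; [exact IHk | apply Rmax_l]. Qed.

Lemma G_ge0 n blk p x j : 0 <= G n blk p x j.
Proof. unfold G, block_norm. destruct p; [apply rpow_ge0 | apply maxR_ge0]. Qed.

Section ExactPenalty.

Variables (S B : (nat -> R) -> Prop) (obj pen : (nat -> R) -> (nat -> R) -> R).
Variables (v rhobar : R).
Hypothesis pen_ge0 : forall x w, S x -> B w -> 0 <= pen x w.
Hypothesis penalized_ge : forall x w, S x -> B w -> v <= obj x w + rhobar * pen x w.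
Hypothesis bound_attained :
  exists x w, S x /\ B w /\ pen x w = 0 /\ obj x w = v.

Let Cfeas x w := S x /\ B w /\ pen x w = 0.

Lemma constrained_ge x w : Cfeas x w -> v <= obj x w.
Proof.
  intros [Sx [Bw P0]]. pose proof (penalized_ge x w Sx Bw). rewrite P0 in H. lra.
Qed.

Lemma opt_val_constrained : opt_val Cfeas obj v.
Proof.
  split; [exact constrained_ge|].
  intros eps Heps. destruct bound_attained as [x [w [Sx [Bw [P0 Ov]]]]].
  exists x, w. split; [repeat split; auto | lra].
Qed.

Lemma exact_penalty rho : rho > rhobar -> forall x w,
  is_gmin (fun x w => S x /\ B w) (fun x w => obj x w + rho * pen x w) x w <->
  is_gmin Cfeas obj x w.
Proof.
  intros Hrho x w.
  destruct bound_attained as [x0 [w0 [Sx0 [Bw0 [P00 Ov0]]]]].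
  split.
  - intros [[Sx Bw] Hmin].
    pose proof (Hmin x0 w0 (conj Sx0 Bw0)) as H0. rewrite P00, Ov0 in H0.
    pose proof (penalized_ge x w Sx Bw). pose proof (pen_ge0 x w Sx Bw).
    assert (P0 : pen x w = 0).
    { destruct (Rle_lt_dec (pen x w) 0); [lra|].
      assert (0 < (rho - rhobar) * pen x w) by (apply Rmult_lt_0_compat; lra). nra. }
    split; [repeat split; auto|].
    intros x' w' C'. pose proof (constrained_ge x' w' C'). rewrite P0 in H0. lra.
  - intros [[Sx [Bw P0]] Hmin]. split; [split; auto|].
    intros x' w' [Sx' Bw']. rewrite P0.
    pose proof (Hmin x0 w0 (conj Sx0 (conj Bw0 P00))). rewrite Ov0 in H.
    pose proof (penalized_ge x' w' Sx' Bw'). pose proof (pen_ge0 x' w' Sx' Bw').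
    assert (rhobar * pen x' w' <= rho * pen x' w') by (apply Rmult_le_compat_r; lra).
    lra.
Qed.

End ExactPenalty.

Section PhiTangent.

Variables (phi : R -> ereal) (d : R).
Hypothesis phi_convex : forall s t l, 0 <= s <= 1 -> 0 <= t <= 1 -> 0 <= l <= 1 ->
  eval (phi (l * s + (1 - l) * t)) <= l * eval (phi s) + (1 - l) * eval (phi t).
Hypothesis phi1 : phi 1 = Fin 1.
Hypothesis phi_deriv : left_deriv1 phi d.

Lemma slope_to_1_mono w t : 0 <= w -> w < t -> t < 1 ->
  (1 - eval (phi w)) / (1 - w) <= (1 - eval (phi t)) / (1 - t).
Proof.
  intros Hw Hwt Ht.
  set (l := (1 - t) / (1 - w)).
  assert (Hl : 0 <= l <= 1).
  { unfold l; split.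
    - apply Rmult_le_pos; [lra | left; apply Rinv_0_lt_compat; lra].
    - apply (Rmult_le_reg_r (1 - w)); [lra|]. field_simplify; lra. }
  pose proof (phi_convex w 1 l ltac:(lra) ltac:(lra) Hl) as Hc.
  replace (l * w + (1 - l) * 1) with t in Hc by (unfold l; field; lra).
  rewrite phi1 in Hc; simpl in Hc.
  set (a := eval (phi w)) in *. set (b := eval (phi t)) in *.
  assert (Hl1 : l * (1 - w) = 1 - t) by (unfold l; field; lra).
  assert (Hb : (1 - w) * b <= (1 - t) * a + (t - w)).
  { assert ((1 - w) * b <= (1 - w) * (l * a + (1 - l) * 1))
      by (apply Rmult_le_compat_l; lra).
    nra. }
  apply (Rmult_le_reg_r ((1 - w) * (1 - t))); [apply Rmult_lt_0_compat; lra|].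
  replace ((1 - a) / (1 - w) * ((1 - w) * (1 - t))) with ((1 - a) * (1 - t))
    by (field; lra).
  replace ((1 - b) / (1 - t) * ((1 - w) * (1 - t))) with ((1 - b) * (1 - w))
    by (field; lra).
  nra.
Qed.

Lemma phi_ge_tangent w : 0 <= w <= 1 -> 1 - d * (1 - w) <= eval (phi w).
Proof.
  intros Hw. destruct (Req_dec w 1) as [->|Hne]; [rewrite phi1; simpl; lra|].
  destruct (Rle_lt_dec (1 - d * (1 - w)) (eval (phi w))) as [ok|bad]; [exact ok|].
  exfalso.
  set (sw := (1 - eval (phi w)) / (1 - w)).
  assert (Hsw : d < sw).
  { unfold sw. apply (Rmult_lt_reg_r (1 - w)); [lra|].
    replace ((1 - eval (phi w)) / (1 - w) * (1 - w)) with (1 - eval (phi w))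
      by (field; lra).
    lra. }
  (* slopes to 1 increase towards the derivative, so none can exceed it *)
  destruct (phi_deriv (sw - d) ltac:(lra)) as [del [Hdel Hslope]].
  set (t := Rmax ((1 + w) / 2) (1 - del / 2)).
  assert (Htw : w < t) by (unfold t; eapply Rlt_le_trans; [|apply Rmax_l]; lra).
  assert (Ht1 : t < 1) by (unfold t; apply Rmax_lub_lt; lra).
  assert (Htd : 1 - del < t) by (unfold t; eapply Rlt_le_trans; [|apply Rmax_r]; lra).
  specialize (Hslope t ltac:(lra)). rewrite phi1 in Hslope; simpl in Hslope.
  pose proof (slope_to_1_mono w t ltac:(lra) Htw Ht1) as Hmono. fold sw in Hmono.
  apply Rabs_def2 in Hslope. lra.
Qed.

Lemma left_deriv1_pos tstar : 0 <= tstar < 1 -> phi tstar = Fin 0 -> 0 < d.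
Proof.
  intros Hts H0. pose proof (phi_ge_tangent tstar ltac:(lra)) as Ht.
  rewrite H0 in Ht; simpl in Ht. destruct (Rle_lt_dec d 0); [|auto].
  assert (d * (1 - tstar) <= 0) by nra. lra.
Qed.

End PhiTangent.

Definition ind_ge (a x : R) : R := if Rle_dec a x then 1 else 0.
Definition count_ge (a : R) (l : list R) : R :=
  fold_right (fun x acc => ind_ge a x + acc) 0 l.

Fixpoint sorted_desc (l : list R) : Prop :=
  match l with
  | [] => True
  | a :: t => match t with [] => True | b :: _ => b <= a end /\ sorted_desc t
  end.

Lemma count_ge_ge0 a l : 0 <= count_ge a l.
Proof. induction l as [|x l IH]; simpl; [lra|]. unfold ind_ge; destruct Rle_dec; lra. Qed.

Lemma count_ge_app a l1 l2 : count_ge a (l1 ++ l2) = count_ge a l1 + count_ge a l2.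
Proof. induction l1; simpl; [ring|]. rewrite IHl1; ring. Qed.

Lemma count_ge_insert_desc a x l : count_ge a (insert_desc x l) = count_ge a (x :: l).
Proof.
  induction l as [|b l IH]; simpl; auto.
  destruct Rle_dec; simpl; auto. simpl in IH. rewrite IH. ring.
Qed.

Lemma count_ge_sort_desc a l : count_ge a (sort_desc l) = count_ge a l.
Proof. induction l; simpl; auto. rewrite count_ge_insert_desc. simpl. rewrite IHl; auto. Qed.

Lemma count_ge_map_seq a h m :
  count_ge a (map h (seq 0 m)) = sumR m (fun j => ind_ge a (h j)).
Proof. induction m; [reflexivity|]. rewrite seq_S, map_app, count_ge_app, IHm. simpl. ring. Qed.

Lemma sorted_insert_desc x l : sorted_desc l -> sorted_desc (insert_desc x l).
Proof.
  induction l as [|b l IH]; simpl; intros H; [split; auto|].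
  destruct (Rle_dec b x) as [Hbx|Hbx]; simpl; [split; auto|].
  destruct H as [Hh Hl]. split; [|auto].
  destruct l as [|c l']; simpl; [lra|]. destruct (Rle_dec c x); simpl; lra.
Qed.

Lemma sorted_sort_desc l : sorted_desc (sort_desc l).
Proof. induction l; simpl; auto. apply sorted_insert_desc; auto. Qed.

(* In a nonincreasing list, an entry >= a at position k forces the first k+1
   entries to be >= a; a > 0 excludes the default value 0 of nth. *)
Lemma count_ge_sorted a t : forall x k, 0 < a -> sorted_desc (x :: t) ->
  a <= nth k (x :: t) 0 -> a <= x /\ INR (S k) <= count_ge a (x :: t).
Proof.
  induction t as [|b t IH]; intros x k Ha Hs Hk.
  - destruct k as [|[|k]]; simpl in Hk; try lra.
    simpl. unfold ind_ge. destruct Rle_dec; [split; lra | lra].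
  - change (count_ge a (x :: b :: t)) with (ind_ge a x + count_ge a (b :: t)).
    destruct k as [|k]; simpl in Hk.
    + pose proof (count_ge_ge0 a (b :: t)).
      change (INR 1) with 1. unfold ind_ge. destruct Rle_dec; [split; lra | lra].
    + destruct Hs as [Hbx Hs]. destruct (IH b k Ha Hs Hk) as [Hb Hc].
      unfold ind_ge. destruct Rle_dec; [|lra]. rewrite S_INR. split; lra.
Qed.

Lemma pi_i_ge_count m g s a : (1 <= s)%nat -> 0 < a -> a <= pi_i m g s ->
  INR s <= sumR m (fun j => ind_ge a (Rabs (g j))).
Proof.
  intros Hs Ha Hp. unfold pi_i, pi_vec in Hp.
  rewrite <- count_ge_map_seq, <- count_ge_sort_desc.
  pose proof (sorted_sort_desc (map (fun j => Rabs (g j)) (seq 0 m))) as Hsort.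
  destruct (sort_desc (map (fun j => Rabs (g j)) (seq 0 m))) as [|x t].
  - destruct (s - 1)%nat; simpl in Hp; lra.
  - destruct (count_ge_sorted a t x (s - 1) Ha Hsort Hp) as [_ Hc].
    replace (S (s - 1)) with s in Hc by lia. exact Hc.
Qed.

Section PenaltyBound.

Variables (phi : R -> ereal) (d alpha : R).
Hypothesis phi_ge0 : forall t, 0 <= t <= 1 -> 0 <= eval (phi t).
Hypothesis phi_tangent : forall t, 0 <= t <= 1 -> 1 - d * (1 - t) <= eval (phi t).
Hypothesis d_pos : 0 < d.
Hypothesis alpha_pos : 0 < alpha.

Lemma ind_ge_le_penalized w g : 0 <= w <= 1 -> 0 <= g ->
  ind_ge alpha g <= eval (phi w) + d / alpha * ((1 - w) * g).
Proof.
  intros Hw Hg.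
  assert (Hr : d / alpha * ((1 - w) * g) = d * (1 - w) * (g / alpha)) by (field; lra).
  assert (0 <= d * (1 - w)) by (apply Rmult_le_pos; lra).
  unfold ind_ge. destruct Rle_dec as [Hag|Hag].
  - pose proof (phi_tangent w Hw).
    assert (1 <= g / alpha)
      by (apply (Rmult_le_reg_r alpha); [lra|]; field_simplify; lra).
    assert (d * (1 - w) * 1 <= d * (1 - w) * (g / alpha)) by (apply Rmult_le_compat_l; lra).
    lra.
  - pose proof (phi_ge0 w Hw).
    assert (0 <= g / alpha) by (apply Rmult_le_pos; [lra | left; apply Rinv_0_lt_compat; lra]).
    assert (0 <= d * (1 - w) * (g / alpha)) by (apply Rmult_le_pos; lra).
    lra.
Qed.

Lemma penalized_ge_sparsity m s g w : (1 <= s)%nat -> (forall j, 0 <= g j) -> box m w ->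
  alpha <= pi_i m g s -> INR s <= Phisum m phi w + d / alpha * inner m (e_minus w) g.
Proof.
  intros Hs Hg [_ Hw] Hp.
  unfold Phisum, inner, e_minus. rewrite <- sumR_scal, <- sumR_plus.
  eapply Rle_trans; [apply (pi_i_ge_count m g s alpha Hs alpha_pos Hp)|].
  apply sumR_le. intros j Hj. rewrite Rabs_pos_eq by auto.
  apply ind_ge_le_penalized; auto.
Qed.

End PenaltyBound.

Lemma support_weight_exists (phi : R -> ereal) tstar m g :
  0 <= tstar <= 1 -> phi tstar = Fin 0 -> phi 1 = Fin 1 ->
  exists w, box m w /\ inner m (e_minus w) g = 0 /\ Phisum m phi w = INR (l0 m g).
Proof.
  intros Hts H0 H1.
  exists (fun i => if lt_dec i m then (if Req_EM_T (g i) 0 then tstar else 1) else 0).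
  split; [split|split].
  - intros i Hi. destruct lt_dec; [lia | auto].
  - intros j Hj. destruct lt_dec; [|lia]. destruct Req_EM_T; lra.
  - unfold inner, e_minus. transitivity (sumR m (fun _ => 0)); [|apply sumR_0].
    apply sumR_ext. intros i Hi.
    destruct lt_dec; [|lia]. destruct Req_EM_T as [e|e]; [rewrite e|]; ring.
  - rewrite l0_sumR. unfold Phisum. apply sumR_ext. intros i Hi.
    destruct lt_dec; [|lia]. destruct Req_EM_T; [rewrite H0 | rewrite H1]; reflexivity.
Qed.

Theorem theorem3p1 (n m : nat) (phi : R -> ereal) (d : R)
  (f : (nat -> R) -> ereal) (Om : (nat -> R) -> Prop) (delta : R)
  (p : pexp) (blk : nat -> nat) (sstar : nat) (alpha : R) :
  in_Phi phi -> left_deriv1 phi d ->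
  proper_vec n f -> lsc_vec n f -> closed_vec n Om ->
  0 <= delta -> valid_p p -> blk_partition n m blk ->
  let Sset := fun x => vec n x /\ Om x /\ ele (f x) delta in
  (* sstar is the optimal value of min { ||G(x)||_0 : x in S }, attained, nonzero *)
  (exists x, Sset x /\ l0 m (G n blk p x) = sstar) ->
  (forall x, Sset x -> (sstar <= l0 m (G n blk p x))%nat) ->
  sstar <> 0%nat ->
  0 < alpha ->
  (forall x, Sset x -> alpha <= pi_i m (G n blk p x) sstar) ->
  let rhobar := d / alpha in
  let Qfeas := fun x w => Sset x /\ box m w /\ inner m (e_minus w) (G n blk p x) = 0 in
  let Qobj := fun (x w : nat -> R) => Phisum m phi w in
  let Pfeas := fun x w => Sset x /\ box m w in
  let Pobj := fun rho (x w : nat -> R) =>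
                Phisum m phi w + rho * inner m (e_minus w) (G n blk p x) in
  ((forall x w, Sset x -> box m w -> Pobj rhobar x w >= INR sstar) /\
   opt_val Qfeas Qobj (INR sstar)) /\
  (forall rho, rho > rhobar ->
     forall x w, is_gmin Pfeas (Pobj rho) x w <-> is_gmin Qfeas Qobj x w).
Proof.
  intros Hphi Hd _ _ _ _ _ _ Sset [xs [Sxs Hl0]] _ Hs0 Ha Hpi rhobar Qfeas Qobj Pfeas Pobj.
  destruct Hphi as [_ [_ [_ [Hconv [[ts [Hts [Hts0 Hge0]]] H1]]]]].
  pose proof (phi_ge_tangent phi d Hconv H1 Hd) as Htan.
  pose proof (left_deriv1_pos phi d Hconv H1 Hd ts Hts Hts0) as Hdpos.
  set (pen := fun x w => inner m (e_minus w) (G n blk p x)).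
  assert (Hpen : forall x w, Sset x -> box m w -> 0 <= pen x w).
  { intros x w _ [_ Hw]. unfold pen, inner, e_minus. rewrite <- (sumR_0 m).
    apply sumR_le. intros i Hi. specialize (Hw i Hi).
    apply Rmult_le_pos; [lra | apply G_ge0]. }
  assert (Hlb : forall x w, Sset x -> box m w -> INR sstar <= Qobj x w + rhobar * pen x w).
  { intros x w Sx Bw. apply (penalized_ge_sparsity phi d alpha Hge0 Htan Hdpos Ha);
      auto using G_ge0; lia. }
  assert (Hatt : exists x w, Sset x /\ box m w /\ pen x w = 0 /\ Qobj x w = INR sstar).
  { destruct (support_weight_exists phi ts m (G n blk p xs) ltac:(lra) Hts0 H1)
      as [ws [Bws [Iws Pws]]].
    exists xs, ws. rewrite <- Hl0. auto. }
  split; [split|].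
  - intros x w Sx Bw. apply Rle_ge, Hlb; auto.
  - exact (opt_val_constrained Sset (box m) Qobj pen _ _ Hlb Hatt).
  - exact (exact_penalty Sset (box m) Qobj pen _ rhobar Hpen Hlb Hatt).
Qed.
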